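(* Let $W$ be a channel from finite $\mathcal X$ to finite $\mathcal Y$ and $W'$ a channel from finite $\mathcal X'$ to finite $\mathcal Y'$, and let $W\times W'$ be the product channel from $\mathcal X\times\mathcal X'$ to $\mathcal Y\times\mathcal Y'$, $(W\times W')_{x,x'}(y,y')=W_x(y)W'_{x'}(y')$. Then \[ V^+_{W\times W'}=V^+_W+V^+_{W'},\qquad V^-_{W\times W'}=V^-_W+V^-_{W'}. \]
   Context: For a channel $W$ (a family of distributions $W_x$ on the output set) and an input distribution $P$: $W_P=\sum_xP(x)W_x$, $D$ is relative entropy (natural log), $I(P,W)=\sum_xP(x)D(W_x\|W_P)$, $C_W=\max_PI(P,W)$, $V_{P,W}=\sum_xP(x)\sum_yW_x(y)\big(\log\frac{W_x(y)}{W_P(y)}-D(W_x\|W_P)\big)^2$, $\mathcal V_W=\{P:I(P,W)=C_W\}$, $V^+_W=\max_{P\in\mathcal V_W}V_{P,W}$, $V^-_W=\min_{P\in\mathcal V_W}V_{P,W}$. *)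

From Stdlib Require Import Reals ClassicalEpsilon.
From HB Require Import structures.
From mathcomp Require Import all_boot.

Set Implicit Arguments. Unset Strict Implicit. Unset Printing Implicit Defensive.

Open Scope R_scope.

HB.instance Definition _ :=
  Monoid.isComLaw.Build R 0 Rplus
    (fun a b c => Logic.eq_sym (Rplus_assoc a b c)) Rplus_comm Rplus_0_l.

Definition rsum (T : finType) (f : T -> R) : R := \big[Rplus/0]_(t : T) f t.

Definition is_dist (T : finType) (P : T -> R) : Prop :=
  (forall t, 0 <= P t) /\ rsum P = 1.

Definition is_channel (X Y : finType) (W : X -> Y -> R) : Prop :=
  forall x, is_dist (W x).

Definition prod_channel (X Y X' Y' : finType) (W : X -> Y -> R)
  (W' : X' -> Y' -> R) : (X * X')%type -> (Y * Y')%type -> R :=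
  fun a b => W a.1 b.1 * W' a.2 b.2.

Definition outd (X Y : finType) (P : X -> R) (W : X -> Y -> R) : Y -> R :=
  fun y => rsum (fun x => P x * W x y).

(* relative entropy, natural log; terms with p y = 0 vanish (0 log 0 = 0) *)
Definition relent (Y : finType) (p q : Y -> R) : R :=
  rsum (fun y => p y * ln (p y / q y)).

Definition mutinf (X Y : finType) (P : X -> R) (W : X -> Y -> R) : R :=
  rsum (fun x => P x * relent (W x) (outd P W)).

Definition dispersion (X Y : finType) (P : X -> R) (W : X -> Y -> R) : R :=
  rsum (fun x => P x * rsum (fun y =>
     W x y * (ln (W x y / outd P W y) - relent (W x) (outd P W)) ^ 2)).

Definition is_max (S : R -> Prop) (m : R) : Prop := S m /\ forall s, S s -> s <= m.
Definition is_min (S : R -> Prop) (m : R) : Prop := S m /\ forall s, S s -> m <= s.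

Definition capacity (X Y : finType) (W : X -> Y -> R) : R :=
  epsilon (inhabits 0)
    (is_max (fun c => exists P : X -> R, is_dist P /\ c = mutinf P W)).

Definition cap_achieving (X Y : finType) (W : X -> Y -> R) (P : X -> R) : Prop :=
  is_dist P /\ mutinf P W = capacity W.

Definition Vplus (X Y : finType) (W : X -> Y -> R) : R :=
  epsilon (inhabits 0)
    (is_max (fun v => exists P : X -> R, cap_achieving W P /\ v = dispersion P W)).
Definition Vminus (X Y : finType) (W : X -> Y -> R) : R :=
  epsilon (inhabits 0)
    (is_min (fun v => exists P : X -> R, cap_achieving W P /\ v = dispersion P W)).

(* For a channel W, I(P, W) = H(W_P) - sum_x P(x) H(W_x) is a linear function
   of P plus a strictly concave function of the output distribution W_P.
   Hence (i) capacity and the extreme dispersions are attained (continuity on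
   the compact simplex, via Bolzano-Weierstrass), and (ii) all
   capacity-achieving inputs induce the same output distribution.
   For the product channel, subadditivity of entropy gives
   I(P, W x W') <= I(P1, W) + I(P2, W') for the marginals P1, P2 of P, with
   equality for product inputs; so capacity is additive and the marginals of a
   capacity-achieving P are capacity-achieving.  By (ii) the output of such a P
   is the product of the marginal outputs, and the variance of a log-likelihood
   ratio is additive on products, so V(P, W x W') = V(P1, W) + V(P2, W').
   Thus the achievable dispersions of W x W' form the sum set of those of W and
   W', whose maximum and minimum are the sums of the maxima and minima. *)

From Stdlib Require Import Reals.
From mathcomp Require Import all_boot.
Open Scope R_scope.
From Stdlib Require Import Lra Lia ClassicalEpsilon Classical FunctionalExtensionality.
Set Implicit Arguments. Unset Strict Implicit. Unset Printing Implicit Defensive.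

Lemma Un_cv_const (c : R) : Un_cv (fun _ => c) c.
Proof. by move=> e he; exists 0%nat => n _; rewrite /R_dist Rminus_eq_0 Rabs_R0. Qed.

Section FiniteSums.
Variable T : finType.

Lemma rsum_ext (f g : T -> R) : (forall t, f t = g t) -> rsum f = rsum g.
Proof. by move=> efg; apply: eq_bigr => t _. Qed.

Lemma rsum_add (f g : T -> R) : rsum (fun t => f t + g t) = rsum f + rsum g.
Proof. exact: big_split. Qed.

Lemma rsum_sub (f g : T -> R) : rsum (fun t => f t - g t) = rsum f - rsum g.
Proof.
have := rsum_add (fun t => f t - g t) g.
by rewrite (@rsum_ext (fun t => f t - g t + g t) f) => [|t]; lra.
Qed.

Lemma rsum_scal (c : R) (f : T -> R) : rsum (fun t => c * f t) = c * rsum f.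
Proof. by rewrite /rsum; elim/big_rec2: _ => [|t a b _ ->]; ring. Qed.

Lemma rsum_scal_r (c : R) (f : T -> R) : rsum (fun t => f t * c) = rsum f * c.
Proof. by rewrite Rmult_comm -rsum_scal; apply: rsum_ext => t; ring. Qed.

Lemma rsum_ge0 (f : T -> R) : (forall t, 0 <= f t) -> 0 <= rsum f.
Proof. by move=> f_ge0; apply: big_ind => [|a b ha hb|t _]; [lra | lra | apply: f_ge0]. Qed.

Lemma rsum_le (f g : T -> R) : (forall t, f t <= g t) -> rsum f <= rsum g.
Proof.
move=> lefg; have : 0 <= rsum (fun t => g t - f t).
  by apply: rsum_ge0 => t; have := lefg t; lra.
rewrite rsum_sub; lra.
Qed.

Lemma rsum_term (f : T -> R) t : (forall t, 0 <= f t) -> f t <= rsum f.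
Proof.
move=> f_ge0; rewrite /rsum (bigD1 t) //=.
have : 0 <= \big[Rplus/0]_(i | i != t) f i.
  by apply: big_ind => [|a b ha hb|i _]; [lra | lra | apply: f_ge0].
lra.
Qed.

Lemma rsum_lt (f g : T -> R) t :
  (forall t, f t <= g t) -> f t < g t -> rsum f < rsum g.
Proof.
move=> lefg ltfg.
have : g t - f t <= rsum (fun s => g s - f s).
  by apply: (@rsum_term (fun s => g s - f s)) => s; have := lefg s; lra.
rewrite rsum_sub; lra.
Qed.

Lemma rsum_delta (t0 : T) (c : R) : rsum (fun t => if t == t0 then c else 0) = c.
Proof. by rewrite /rsum (bigD1 t0) //= eqxx big1 ?Rplus_0_r // => t /negbTE ->. Qed.

Lemma rsum_cv (F : nat -> T -> R) (G : T -> R) :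
  (forall t, Un_cv (fun k => F k t) (G t)) -> Un_cv (fun k => rsum (F k)) (rsum G).
Proof.
move=> cvF; rewrite /rsum; elim: (index_enum T) => [|a l IH].
  rewrite big_nil; apply: (Un_cv_ext (fun _ => 0)) => [k|]; first by rewrite big_nil.
  exact: Un_cv_const.
rewrite big_cons; apply: (Un_cv_ext (fun k => F k a + \big[Rplus/0]_(j <- l) F k j)).
  by move=> k; rewrite big_cons.
exact: CV_plus.
Qed.

End FiniteSums.

Lemma rsum_exchange (A B : finType) (F : A -> B -> R) :
  rsum (fun a => rsum (fun b => F a b)) = rsum (fun b => rsum (fun a => F a b)).
Proof. exact: exchange_big. Qed.

Lemma rsum_pair (A B : finType) (F : (A * B)%type -> R) :
  rsum F = rsum (fun a => rsum (fun b => F (a, b))).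
Proof. by rewrite /rsum pair_big; apply: eq_bigr => -[a b]. Qed.

Lemma rsum_sep (A B : finType) (f : A -> R) (g : B -> R) :
  rsum (fun p : (A * B)%type => f p.1 * g p.2) = rsum f * rsum g.
Proof. by rewrite rsum_pair -rsum_scal_r; apply: rsum_ext => a /=; rewrite rsum_scal. Qed.

(** The function t ln t (minus the entropy density); ent 0 = 0 since ln 0 = 0 here. *)
Definition ent (t : R) : R := t * ln t.

Lemma ent0 : ent 0 = 0.
Proof. by rewrite /ent Rmult_0_l. Qed.

Lemma ln_le_sub1 x : 0 < x -> ln x <= x - 1.
Proof. by move=> hx; have := exp_ineq1_le (ln x); rewrite exp_ln //; lra. Qed.

Lemma ln_lt_sub1 x : 0 < x -> x <> 1 -> ln x < x - 1.
Proof.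
move=> hx hx1; have ln_neq0 : ln x <> 0.
  by move=> e; apply: hx1; rewrite -(exp_ln x) // e exp_0.
by have := exp_ineq1 (ln x) ln_neq0; rewrite exp_ln //; lra.
Qed.

Lemma ent_mul a b : 0 <= a -> 0 <= b -> ent (a * b) = a * ent b + b * ent a.
Proof.
rewrite /ent => -[ha|<-] -[hb|<-]; try ring.
by rewrite ln_mult //; ring.
Qed.

(* For a, q > 0 the two identities reducing Gibbs' inequality
   a ln (a / q) >= a - q to the bound ln t <= t - 1 at t = q / a. *)
Lemma ent_ln_ratio a q : 0 < a -> 0 < q ->
  ent a - a * ln q = - (a * ln (q / a)) /\ a * (q / a - 1) = q - a.
Proof.
move=> ha hq; rewrite /ent /Rdiv ln_mult ?ln_Rinv //; last exact: Rinv_0_lt_compat.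
by split; [ring | field; lra].
Qed.

Lemma gibbs_term a q : 0 <= a -> 0 <= q -> (0 < a -> 0 < q) ->
  a - q <= ent a - a * ln q.
Proof.
case=> [ha|<-] hq hpos; last by rewrite ent0; lra.
have hq' := hpos ha; have [-> e] := ent_ln_ratio ha hq'.
have : a * ln (q / a) <= a * (q / a - 1).
  by apply: Rmult_le_compat_l; [lra | apply: ln_le_sub1; apply: Rdiv_lt_0_compat].
lra.
Qed.

Lemma gibbs_term_strict a q : 0 <= a -> 0 < q -> a <> q ->
  a - q < ent a - a * ln q.
Proof.
case=> [ha|<-] hq haq; last by rewrite ent0; lra.
have [-> e] := ent_ln_ratio ha hq.
have ratio_neq1 : q / a <> 1.
  move=> e1; apply: haq; have -> : q = a * (q / a) by field; lra.
  by rewrite e1 Rmult_1_r.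
have : a * ln (q / a) < a * (q / a - 1).
  by apply: Rmult_lt_compat_l => //; apply: ln_lt_sub1 => //; apply: Rdiv_lt_0_compat.
lra.
Qed.

Lemma ent_midpoint a b : 0 <= a -> 0 <= b ->
  2 * ent ((a + b) / 2) <= ent a + ent b /\
  (a <> b -> 2 * ent ((a + b) / 2) < ent a + ent b).
Proof.
move=> ha hb; set m := (a + b) / 2.
have e : 2 * ent m = a * ln m + b * ln m by rewrite /ent /m; field.
have [hm|hm] : 0 < m \/ a = 0 /\ b = 0 by rewrite /m; lra.
  have g1 := gibbs_term ha (Rlt_le _ _ hm) (fun _ => hm).
  have g2 := gibbs_term hb (Rlt_le _ _ hm) (fun _ => hm).
  split; first by rewrite /m in g1 g2 e *; lra.
  move=> hab; have [ham|hbm] : a <> m \/ b <> m by rewrite /m; lra.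
    by have := gibbs_term_strict ha hm ham; rewrite /m in g2 e *; lra.
  by have := gibbs_term_strict hb hm hbm; rewrite /m in g1 e *; lra.
case: hm => ha0 hb0; have -> : m = 0 by rewrite /m ha0 hb0; field.
by rewrite ha0 hb0 ent0; split => [|[]//]; lra.
Qed.

(* Near 0, |u ln u| <= 2 sqrt u + u^2; used for continuity of ent at 0. *)
Lemma ent_bound u : 0 <= u -> Rabs (ent u) <= 2 * sqrt u + u * u.
Proof.
case=> [hu|<-]; last by rewrite ent0 Rabs_R0 sqrt_0; lra.
have hs : 0 < sqrt u by apply: sqrt_lt_R0.
have hsu : sqrt u * sqrt u = u by apply: sqrt_sqrt; lra.
have ln_u : ln u = 2 * ln (sqrt u) by rewrite -{1}hsu ln_mult //; ring.
have up := ln_le_sub1 hu.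
have low := ln_le_sub1 (Rinv_0_lt_compat _ hs); rewrite ln_Rinv // in low.
rewrite /ent; apply: Rabs_le; split.
  have : u * (- ln (sqrt u)) <= u * (/ sqrt u - 1) by apply: Rmult_le_compat_l; lra.
  have -> : u * (/ sqrt u - 1) = sqrt u - u.
    by rewrite Rmult_minus_distr_l Rmult_1_r -{1}hsu; field; lra.
  rewrite ln_u; nra.
have : u * ln u <= u * (u - 1) by apply: Rmult_le_compat_l; lra.
nra.
Qed.

Lemma ent_cv (u : nat -> R) l : (forall k, 0 <= u k) -> 0 <= l -> Un_cv u l ->
  Un_cv (fun k => ent (u k)) (ent l).
Proof.
move=> u_ge0 [hl|<-] cvu.
  apply: CV_mult => //; apply: continuity_seq cvu.
  by apply: derivable_continuous_pt; exists (/ l); apply: derivable_pt_lim_ln.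
rewrite ent0.
have cv_sqrt : Un_cv (fun k => sqrt (u k)) 0.
  by rewrite -sqrt_0; apply: continuity_seq cvu; apply: continuity_pt_sqrt; lra.
have cv_sq : Un_cv (fun k => u k * u k) 0 by rewrite -(Rmult_0_l 0); apply: CV_mult.
move=> e he.
have [|N1 HN1] := cv_sqrt (e / 4); first lra.
have [|N2 HN2] := cv_sq (e / 4); first lra.
exists (Nat.max N1 N2) => n hn.
have := HN1 n ltac:(lia); have := HN2 n ltac:(lia).
rewrite /R_dist !Rminus_0_r.
have := ent_bound (u_ge0 n); have := Rle_abs (sqrt (u n)); have := Rle_abs (u n * u n).
lra.
Qed.

(** Extracting convergent subsequences in [0, 1]^T. *)

Definition incr (phi : nat -> nat) : Prop := forall n, (phi n < phi (S n))%coq_nat.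

Lemma incr_lt phi : incr phi -> forall n m, (n < m)%coq_nat -> (phi n < phi m)%coq_nat.
Proof.
move=> hphi n; elim=> [|m IH] hnm; first lia.
have := hphi m; case: (Nat.eq_dec n m) => [->|hne]; first lia.
by have := IH ltac:(lia); lia.
Qed.

Lemma incr_ge phi : incr phi -> forall n, (n <= phi n)%coq_nat.
Proof. by move=> hphi; elim=> [|n IH]; [lia | have := hphi n; lia]. Qed.

Lemma incr_comp phi psi : incr phi -> incr psi -> incr (fun n => phi (psi n)).
Proof. by move=> hphi hpsi n; apply: incr_lt. Qed.

Lemma cv_subseq (u : nat -> R) l phi :
  incr phi -> Un_cv u l -> Un_cv (fun n => u (phi n)) l.
Proof.
move=> hphi cvu e he; have [N HN] := cvu e he; exists N => n hn; apply: HN.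
by have := incr_ge hphi n; lia.
Qed.

Lemma inv_succ_small e : 0 < e -> exists N, forall n, (N <= n)%coq_nat -> / INR (S n) < e.
Proof.
move=> he; have [N HN] := INR_unbounded (/ e); exists N => n hn.
have hN : 0 < INR N by have := Rinv_0_lt_compat _ he; lra.
have : INR N <= INR (S n) by apply: le_INR; lia.
move=> hle; rewrite -(Rinv_inv e); apply: Rinv_lt_contravar; last lra.
by apply: Rmult_lt_0_compat; [apply: Rinv_0_lt_compat|]; lra.
Qed.

Lemma bounded_subseq (v : nat -> R) : (forall n, 0 <= v n <= 1) ->
  exists phi l, incr phi /\ Un_cv (fun n => v (phi n)) l.
Proof.
move=> hv; have [l adh] := @Bolzano_Weierstrass v _ (compact_P3 0 1) hv.
have close (kN : nat * nat) :
    exists p, (kN.2 <= p)%coq_nat /\ Rabs (v p - l) < / INR (S kN.1).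
  have hpos : 0 < / INR (S kN.1) by apply: Rinv_0_lt_compat; apply: lt_0_INR; lia.
  have [|p [hp1 hp2]] := adh (disc l (mkposreal _ hpos)) kN.2.
    by exists (mkposreal _ hpos) => y hy.
  by exists p.
have [pick hpick] := choice _ close.
pose fix phi n := if n is m.+1 then pick (n, (phi m).+1) else pick (0, 0)%nat.
exists phi, l; split; first by move=> n /=; have := (hpick (n.+1, (phi n).+1)).1 => /=; lia.
move=> e he; have [N HN] := inv_succ_small he; exists N => n hn.
have : Rabs (v (phi n) - l) < / INR (S n) by case: n {hn} => [|n]; apply: (hpick (_, _)).2.
by rewrite /R_dist; have := HN n hn; lra.
Qed.

(* The same for sequences in [0, 1]^T, T finite, by successive extraction. *)
Lemma bounded_subseq_fin (T : finType) (u : nat -> T -> R) :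
  (forall n t, 0 <= u n t <= 1) ->
  exists phi p, incr phi /\ forall t, Un_cv (fun n => u (phi n) t) (p t).
Proof.
move=> hu.
suff [phi [p [hphi cvp]]] : exists phi p, incr phi /\
    forall t, t \in enum T -> Un_cv (fun n => u (phi n) t) (p t).
  by exists phi, p; split => // t; apply: cvp; rewrite mem_enum.
elim: (enum T) => [|a s [phi [p [hphi cvp]]]].
  by exists id, (fun _ => 0); split => // n /=; lia.
have [psi [l [hpsi cvl]]] := @bounded_subseq (fun n => u (phi n) a) (fun n => hu _ a).
exists (fun n => phi (psi n)), (fun t => if t == a then l else p t).
split; first exact: incr_comp.
move=> t; rewrite inE; case: eqP => [-> _ //|_ /= ht].
by apply: (@cv_subseq (fun n => u (phi n) t)) => //; apply: cvp.
Qed.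

(** A sequentially continuous function on a sequentially closed subset of
    [0, 1]^T attains its maximum and minimum. *)

Section Extremum.
Variables (T : finType) (K : (T -> R) -> Prop) (f : (T -> R) -> R).
Hypothesis K_bounded : forall P, K P -> forall t, 0 <= P t <= 1.
Hypothesis K_closed_f_cont : forall (u : nat -> T -> R) P,
  (forall n, K (u n)) -> (forall t, Un_cv (fun n => u n t) (P t)) ->
  K P /\ Un_cv (fun n => f (u n)) (f P).

Lemma seq_compact (u : nat -> T -> R) : (forall n, K (u n)) ->
  exists phi P, incr phi /\ K P /\ Un_cv (fun n => f (u (phi n))) (f P).
Proof.
move=> hu; have [phi [P [hphi cvP]]] := @bounded_subseq_fin T u (fun n => K_bounded (hu n)).
have [KP cvf] := K_closed_f_cont (fun n => hu (phi n)) cvP.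
by exists phi, P.
Qed.

(* f is bounded above on K: along a subsequence of any u with f (u n) > n the
   values f (u n) would converge. *)
Lemma bounded_above : exists B, forall P, K P -> f P <= B.
Proof.
apply: NNPP => unbounded.
have big_value (n : nat) : exists P, K P /\ INR n < f P.
  apply: NNPP => none; apply: unbounded; exists (INR n) => P KP.
  by apply: Rnot_lt_le => hlt; apply: none; exists P.
have [u hu] := choice _ big_value.
have [phi [P [hphi [_ cvf]]]] := seq_compact (fun n => (hu n).1).
have [N HN] := cvf 1 Rlt_0_1; have [M HM] := INR_unbounded (f P + 1).
pose n := Nat.max N M; have := HN n ltac:(lia); rewrite /R_dist.
have := (hu (phi n)).2; have := Rle_abs (f (u (phi n)) - f P).
have : INR M <= INR (phi n) by apply: le_INR; have := incr_ge hphi n; lia.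
lra.
Qed.

Hypothesis K_nonempty : exists P, K P.

(* The supremum of f on K is the limit along a maximizing subsequence. *)
Lemma attain_max : exists P, K P /\ forall Q, K Q -> f Q <= f P.
Proof.
have [B hB] := bounded_above.
pose values y := exists P, K P /\ y = f P.
have values_bounded : bound values by exists B => y [P [KP ->]]; apply: hB.
have values_nonempty : exists y, values y.
  by have [P KP] := K_nonempty; exists (f P), P.
have [M [M_ub M_least]] := completeness _ values_bounded values_nonempty.
have near_sup (n : nat) : exists P, K P /\ M - / INR (S n) < f P.
  apply: NNPP => none.
  have hpos : 0 < / INR (S n) by apply: Rinv_0_lt_compat; apply: lt_0_INR; lia.
  suff : M <= M - / INR (S n) by lra.
  apply: M_least => y [P [KP ->]]; apply: Rnot_lt_le => hlt; apply: none; exists P.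
  by split.
have [u hu] := choice _ near_sup.
have [phi [P [hphi [KP cvf]]]] := seq_compact (fun n => (hu n).1).
exists P; split => // Q KQ; apply: Rle_trans (M_ub _ (ex_intro _ Q (conj KQ erefl))) _.
apply: Rnot_lt_le => hlt; have he : 0 < (M - f P) / 2 by lra.
have [N1 HN1] := cvf _ he; have [N2 HN2] := inv_succ_small he.
pose n := Nat.max N1 N2; have := HN1 n ltac:(lia); rewrite /R_dist.
have := (hu (phi n)).2; have := Rle_abs (f (u (phi n)) - f P).
have : / INR (S (phi n)) < (M - f P) / 2 by apply: HN2; have := incr_ge hphi n; lia.
lra.
Qed.

End Extremum.

Lemma attain_min (T : finType) (K : (T -> R) -> Prop) (f : (T -> R) -> R) :
  (forall P, K P -> forall t, 0 <= P t <= 1) ->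
  (forall (u : nat -> T -> R) P, (forall n, K (u n)) ->
     (forall t, Un_cv (fun n => u n t) (P t)) ->
     K P /\ Un_cv (fun n => f (u n)) (f P)) ->
  (exists P, K P) -> exists P, K P /\ forall Q, K Q -> f P <= f Q.
Proof.
move=> K_bounded K_closed_f_cont K_nonempty.
have [u P hu cvu|P [KP maxP]] := @attain_max T K (fun P => - f P) K_bounded _ K_nonempty.
  by have [KP cvf] := K_closed_f_cont u P hu cvu; split => //; apply: CV_opp.
by exists P; split => // Q KQ; have := maxP Q KQ; lra.
Qed.

Lemma dist_le1 (T : finType) (P : T -> R) t : is_dist P -> 0 <= P t <= 1.
Proof. by case=> P_ge0 P_sum; split => //; rewrite -P_sum; apply: rsum_term. Qed.

Lemma dist_cv (T : finType) (u : nat -> T -> R) P : (forall n, is_dist (u n)) ->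
  (forall t, Un_cv (fun n => u n t) (P t)) -> is_dist P.
Proof.
move=> hu cvu; split.
  move=> t; apply: Rnot_lt_le => hlt; have [|N HN] := cvu t (- P t); first lra.
  have := HN N (le_n _); rewrite /R_dist => /Rabs_def2.
  by have := (hu N).1 t; lra.
apply: (UL_sequence (fun n => rsum (u n))); first exact: rsum_cv.
by apply: (Un_cv_ext (fun _ => 1)) => [n|]; [rewrite (hu n).2 | apply: Un_cv_const].
Qed.

Section Channel.
Variables (X Y : finType) (W : X -> Y -> R).
Hypothesis hW : is_channel W.

Lemma W_ge0 x y : 0 <= W x y.
Proof. exact: (hW x).1. Qed.

Lemma W_sum x : rsum (W x) = 1.
Proof. exact: (hW x).2. Qed.

Lemma outd_ge0 P y : (forall x, 0 <= P x) -> 0 <= outd P W y.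
Proof. by move=> P_ge0; apply: rsum_ge0 => x; apply: Rmult_le_pos => //; apply: W_ge0. Qed.

Lemma outd_pos P x y : (forall x, 0 <= P x) -> 0 < P x -> 0 < W x y -> 0 < outd P W y.
Proof.
move=> P_ge0 Px_gt0 Wxy_gt0; apply: Rlt_le_trans (Rmult_lt_0_compat _ _ Px_gt0 Wxy_gt0) _.
by apply: (@rsum_term _ (fun x => P x * W x y)) => t; apply: Rmult_le_pos => //; apply: W_ge0.
Qed.

Lemma outd_dist P : is_dist P -> is_dist (outd P W).
Proof.
case=> P_ge0 P_sum; split => [y|]; first exact: outd_ge0.
rewrite /outd rsum_exchange -P_sum; apply: rsum_ext => x.
by rewrite rsum_scal W_sum Rmult_1_r.
Qed.

Definition negentropy (x : X) : R := rsum (fun y => ent (W x y)).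

Lemma mutinf_ent P : (forall x, 0 <= P x) ->
  mutinf P W = rsum (fun x => P x * negentropy x) - rsum (fun y => ent (outd P W y)).
Proof.
move=> P_ge0.
have term x : P x * relent (W x) (outd P W) =
    P x * negentropy x - rsum (fun y => P x * W x y * ln (outd P W y)).
  rewrite /negentropy /relent -!rsum_scal -rsum_sub; apply: rsum_ext => y.
  case: (W_ge0 x y) => [Wxy_gt0|<-]; last by rewrite ent0; ring.
  case: (P_ge0 x) => [Px_gt0|<-]; last by ring.
  have q_gt0 := outd_pos P_ge0 Px_gt0 Wxy_gt0.
  rewrite /ent /Rdiv ln_mult ?ln_Rinv //; last exact: Rinv_0_lt_compat.
  ring.
rewrite /mutinf (rsum_ext term) rsum_sub rsum_exchange; congr (_ - _).
by apply: rsum_ext => y; rewrite rsum_scal_r.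
Qed.

Lemma mutinf_cv (u : nat -> X -> R) P : (forall n, is_dist (u n)) -> is_dist P ->
  (forall x, Un_cv (fun n => u n x) (P x)) ->
  Un_cv (fun n => mutinf (u n) W) (mutinf P W).
Proof.
move=> hu hP cvu; rewrite mutinf_ent; last exact: hP.1.
apply: (Un_cv_ext (fun n => rsum (fun x => u n x * negentropy x) -
                           rsum (fun y => ent (outd (u n) W y)))).
  by move=> n; rewrite mutinf_ent //; apply: (hu n).1.
have cv_outd y : Un_cv (fun n => outd (u n) W y) (outd P W y).
  by apply: rsum_cv => x; apply: CV_mult => //; apply: Un_cv_const.
apply: CV_minus.
  by apply: rsum_cv => x; apply: CV_mult => //; apply: Un_cv_const.
apply: rsum_cv => y; apply: ent_cv (cv_outd y); last exact: outd_ge0 hP.1 .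
by move=> n; apply: outd_ge0 (hu n).1.
Qed.

End Channel.

(** The variance of the log-likelihood ratio ln (w / q) under w: the dispersion
    is its average over the inputs, with q the output distribution. *)
Definition lvar (T : finType) (w q : T -> R) : R :=
  rsum (fun t => w t * (ln (w t / q t) - relent w q) ^ 2).

Lemma eps_max (S : R -> Prop) m : is_max S m -> epsilon (inhabits 0) (is_max S) = m.
Proof.
move=> maxm; have [Se Se_max] := epsilon_spec (inhabits 0) (is_max S) (ex_intro _ m maxm).
by have [Sm Sm_max] := maxm; have := Se_max _ Sm; have := Sm_max _ Se; lra.
Qed.

Lemma eps_min (S : R -> Prop) m : is_min S m -> epsilon (inhabits 0) (is_min S) = m.
Proof.
move=> minm; have [Se Se_min] := epsilon_spec (inhabits 0) (is_min S) (ex_intro _ m minm).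
by have [Sm Sm_min] := minm; have := Se_min _ Sm; have := Sm_min _ Se; lra.
Qed.

Section Capacity.
Variables (X Y : finType) (x0 : X) (W : X -> Y -> R).
Hypothesis hW : is_channel W.

Lemma capacity_is_max :
  is_max (fun c => exists P : X -> R, is_dist P /\ c = mutinf P W) (capacity W).
Proof.
apply: epsilon_spec.
have [|||P [hP maxP]] := @attain_max X (@is_dist X) (fun P => mutinf P W).
- by move=> P hP x; apply: dist_le1.
- move=> u P hu cvu; have hP := dist_cv hu cvu.
  by split => //; apply: mutinf_cv.
- exists (fun x => if x == x0 then 1 else 0).
  by split => [x|]; [case: eqP; lra | apply: rsum_delta].
by exists (mutinf P W); split => [|c [Q [hQ ->]]]; [exists P | apply: maxP].
Qed.

Lemma mutinf_le_capacity P : is_dist P -> mutinf P W <= capacity W.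
Proof. by move=> hP; apply: capacity_is_max.2; exists P. Qed.

Lemma cap_achieving_exists : exists P, cap_achieving W P.
Proof. by have [[P [hP e]] _] := capacity_is_max; exists P. Qed.

(* All capacity-achieving distributions induce the same output distribution:
   otherwise their midpoint would have strictly larger mutual information,
   by strict convexity of ent. *)
Lemma cap_achieving_outd P1 P2 : cap_achieving W P1 -> cap_achieving W P2 ->
  outd P1 W = outd P2 W.
Proof.
move=> [h1 I1] [h2 I2]; apply: functional_extensionality => y0; apply: NNPP => hne.
pose Pm x := (P1 x + P2 x) / 2.
have hPm : is_dist Pm.
  split => [x|]; first by rewrite /Pm; have := h1.1 x; have := h2.1 x; lra.
  by rewrite /Pm /Rdiv rsum_scal_r rsum_add h1.2 h2.2; lra.
have outd_mid y : outd Pm W y = (outd P1 W y + outd P2 W y) / 2.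
  by rewrite /outd /Pm /Rdiv -rsum_add -rsum_scal_r; apply: rsum_ext => x; ring.
have lin_mid : rsum (fun x => Pm x * negentropy W x) =
    (rsum (fun x => P1 x * negentropy W x) + rsum (fun x => P2 x * negentropy W x)) / 2.
  by rewrite /Pm /Rdiv -rsum_add -rsum_scal_r; apply: rsum_ext => x; ring.
have ent_mid : 2 * rsum (fun y => ent (outd Pm W y)) <
    rsum (fun y => ent (outd P1 W y)) + rsum (fun y => ent (outd P2 W y)).
  rewrite -rsum_scal -rsum_add; apply: (@rsum_lt _ _ _ y0) => [y|]; rewrite outd_mid.
    exact: (ent_midpoint (outd_ge0 hW y h1.1) (outd_ge0 hW y h2.1)).1.
  exact: (ent_midpoint (outd_ge0 hW y0 h1.1) (outd_ge0 hW y0 h2.1)).2 hne.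
have := mutinf_le_capacity hPm.
have := mutinf_ent hW h1.1; have := mutinf_ent hW h2.1.
rewrite (mutinf_ent hW hPm.1) I1 I2; lra.
Qed.

Definition disp_values (v : R) : Prop :=
  exists P, cap_achieving W P /\ v = dispersion P W.

(* The capacity-achieving distributions form a closed set on which the
   dispersion is continuous: their output distribution is the same, so the
   dispersion is linear in P there. *)
Lemma cap_achieving_closed (u : nat -> X -> R) P :
  (forall n, cap_achieving W (u n)) -> (forall x, Un_cv (fun n => u n x) (P x)) ->
  cap_achieving W P /\ Un_cv (fun n => dispersion (u n) W) (dispersion P W).
Proof.
move=> hu cvu; have hP : is_dist P := dist_cv (fun n => (hu n).1) cvu.
have hPa : cap_achieving W P.
  split => //; apply: (UL_sequence (fun n => mutinf (u n) W)).
    by apply: mutinf_cv cvu => // n; apply: (hu n).1.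
  by apply: (Un_cv_ext (fun _ => capacity W)) => [n|]; [rewrite (hu n).2 | apply: Un_cv_const].
split => //; apply: (Un_cv_ext (fun n => rsum (fun x => u n x * lvar (W x) (outd P W)))).
  by move=> n; rewrite /dispersion (cap_achieving_outd (hu n) hPa).
by apply: rsum_cv => x; apply: CV_mult => //; apply: Un_cv_const.
Qed.

Lemma Vplus_is_max : is_max disp_values (Vplus W).
Proof.
apply: epsilon_spec; have [P0 hP0] := cap_achieving_exists.
have [|||P [hP maxP]] := @attain_max X (cap_achieving W) (fun P => dispersion P W).
- by move=> P [hP _] x; apply: dist_le1.
- exact: cap_achieving_closed.
- by exists P0.
by exists (dispersion P W); split => [|v [Q [hQ ->]]]; [exists P | apply: maxP].
Qed.

Lemma Vminus_is_min : is_min disp_values (Vminus W).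
Proof.
apply: epsilon_spec; have [P0 hP0] := cap_achieving_exists.
have [|||P [hP minP]] := @attain_min X (cap_achieving W) (fun P => dispersion P W).
- by move=> P [hP _] x; apply: dist_le1.
- exact: cap_achieving_closed.
- by exists P0.
by exists (dispersion P W); split => [|v [Q [hQ ->]]]; [exists P | apply: minP].
Qed.

End Capacity.

Section Marginals.
Variables (A B : finType).

Definition marg1 (J : (A * B)%type -> R) (a : A) : R := rsum (fun b => J (a, b)).
Definition marg2 (J : (A * B)%type -> R) (b : B) : R := rsum (fun a => J (a, b)).
Definition prodd (P1 : A -> R) (P2 : B -> R) (p : (A * B)%type) : R := P1 p.1 * P2 p.2.

Lemma marg1_dist J : is_dist J -> is_dist (marg1 J).
Proof.
case=> J_ge0 J_sum; split => [a|]; first by apply: rsum_ge0 => b; apply: J_ge0.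
by rewrite -J_sum rsum_pair.
Qed.

Lemma marg2_dist J : is_dist J -> is_dist (marg2 J).
Proof.
case=> J_ge0 J_sum; split => [b|]; first by apply: rsum_ge0 => a; apply: J_ge0.
by rewrite -J_sum rsum_pair rsum_exchange.
Qed.

Lemma marg1_pos J a b : (forall p, 0 <= J p) -> 0 < J (a, b) -> 0 < marg1 J a.
Proof. by move=> J_ge0 hJ; apply: Rlt_le_trans hJ _; apply: (@rsum_term _ (fun b => J (a, b))). Qed.

Lemma marg2_pos J a b : (forall p, 0 <= J p) -> 0 < J (a, b) -> 0 < marg2 J b.
Proof. by move=> J_ge0 hJ; apply: Rlt_le_trans hJ _; apply: (@rsum_term _ (fun a => J (a, b))). Qed.

Lemma prodd_dist P1 P2 : is_dist P1 -> is_dist P2 -> is_dist (prodd P1 P2).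
Proof.
move=> [P1_ge0 P1_sum] [P2_ge0 P2_sum].
split => [[a b]|]; first exact: Rmult_le_pos.
by rewrite /prodd rsum_sep P1_sum P2_sum Rmult_1_r.
Qed.

Lemma marg1_prodd P1 P2 : is_dist P2 -> marg1 (prodd P1 P2) = P1.
Proof.
move=> [_ P2_sum]; apply: functional_extensionality => a.
by rewrite /marg1 /prodd /= rsum_scal P2_sum Rmult_1_r.
Qed.

Lemma marg2_prodd P1 P2 : is_dist P1 -> marg2 (prodd P1 P2) = P2.
Proof.
move=> [_ P1_sum]; apply: functional_extensionality => b.
by rewrite /marg2 /prodd /= rsum_scal_r P1_sum Rmult_1_l.
Qed.

Lemma rsum_marg J (f : A -> R) (g : B -> R) :
  rsum (fun p => J p * (f p.1 + g p.2)) =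
  rsum (fun a => marg1 J a * f a) + rsum (fun b => marg2 J b * g b).
Proof.
under rsum_ext => p do rewrite Rmult_plus_distr_l.
rewrite rsum_add !rsum_pair; congr (_ + _).
  by apply: rsum_ext => a /=; rewrite rsum_scal_r.
by rewrite rsum_exchange; apply: rsum_ext => b /=; rewrite rsum_scal_r.
Qed.

(* Subadditivity of entropy: H(J) <= H(J1) + H(J2), via Gibbs' inequality
   between J and the product of its marginals. *)
Lemma ent_subadditive J : is_dist J ->
  rsum (fun a => ent (marg1 J a)) + rsum (fun b => ent (marg2 J b)) <= rsum (fun p => ent (J p)).
Proof.
move=> hJ; have [J_ge0 J_sum] := hJ.
have [J1_ge0 J1_sum] := marg1_dist hJ; have [J2_ge0 J2_sum] := marg2_dist hJ.
have gibbs p : J p - prodd (marg1 J) (marg2 J) p <=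
    ent (J p) - J p * (ln (marg1 J p.1) + ln (marg2 J p.2)).
  case: p => a b /=; rewrite /prodd /=.
  case: (J_ge0 (a, b)) => [Jp_gt0|<-].
    have J1_gt0 := marg1_pos J_ge0 Jp_gt0; have J2_gt0 := marg2_pos J_ge0 Jp_gt0.
    rewrite -ln_mult //; apply: gibbs_term; [exact: J_ge0 | nra | move=> _; nra].
  by rewrite ent0; have := Rmult_le_pos _ _ (J1_ge0 a) (J2_ge0 b); lra.
have := rsum_le gibbs.
rewrite !rsum_sub (rsum_marg J (fun a => ln (marg1 J a)) (fun b => ln (marg2 J b))).
have -> : rsum (prodd (marg1 J) (marg2 J)) = 1 by rewrite /prodd rsum_sep J1_sum J2_sum; ring.
by rewrite J_sum /ent; lra.
Qed.

Section ProductLvar.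
Variables (w q1 : A -> R) (w' q2 : B -> R).
Hypotheses (hw : is_dist w) (hw' : is_dist w').
Hypotheses (hq1 : forall a, 0 < w a -> 0 < q1 a) (hq2 : forall b, 0 < w' b -> 0 < q2 b).

Lemma prodd_ln_ratio (g : R -> R) p :
  prodd w w' p * g (ln (prodd w w' p / prodd q1 q2 p)) =
  prodd w w' p * g (ln (w p.1 / q1 p.1) + ln (w' p.2 / q2 p.2)).
Proof.
case: p => a b; rewrite /prodd /=.
case: (hw.1 a) => [wa_gt0|<-]; last by ring.
case: (hw'.1 b) => [wb_gt0|<-]; last by ring.
have q1_gt0 := hq1 wa_gt0; have q2_gt0 := hq2 wb_gt0.
rewrite -ln_mult; try exact: Rdiv_lt_0_compat.
by congr (_ * g (ln _)); field; lra.
Qed.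

Lemma relent_prodd : relent (prodd w w') (prodd q1 q2) = relent w q1 + relent w' q2.
Proof.
rewrite /relent (rsum_ext (prodd_ln_ratio id)).
rewrite (rsum_ext (g := fun p => (w p.1 * ln (w p.1 / q1 p.1)) * w' p.2 +
                                 w p.1 * (w' p.2 * ln (w' p.2 / q2 p.2)))); last first.
  by move=> p; rewrite /prodd /id; ring.
rewrite rsum_add (rsum_sep (fun a => w a * ln (w a / q1 a)) w').
by rewrite (rsum_sep w (fun b => w' b * ln (w' b / q2 b))) hw.2 hw'.2; ring.
Qed.

Lemma lvar_prodd : lvar (prodd w w') (prodd q1 q2) = lvar w q1 + lvar w' q2.
Proof.
rewrite /lvar relent_prodd.
set D1 := relent w q1; set D2 := relent w' q2.
(* the cross term vanishes since each factor is centred *)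
have centred : rsum (fun a => w a * (ln (w a / q1 a) - D1)) = 0.
  under rsum_ext => a do rewrite Rmult_minus_distr_l.
  by rewrite rsum_sub rsum_scal_r hw.2 /D1 /relent; ring.
rewrite (rsum_ext (prodd_ln_ratio (fun t => (t - (D1 + D2)) ^ 2))).
rewrite (rsum_ext (g := fun p =>
    (w p.1 * (ln (w p.1 / q1 p.1) - D1) ^ 2) * w' p.2 +
    (w p.1 * (w' p.2 * (ln (w' p.2 / q2 p.2) - D2) ^ 2) +
     2 * ((w p.1 * (ln (w p.1 / q1 p.1) - D1)) * (w' p.2 * (ln (w' p.2 / q2 p.2) - D2))))));
  last by move=> p; rewrite /prodd; ring.
rewrite !rsum_add rsum_scal (rsum_sep (fun a => w a * (ln (w a / q1 a) - D1) ^ 2) w').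
rewrite (rsum_sep w (fun b => w' b * (ln (w' b / q2 b) - D2) ^ 2)).
rewrite (rsum_sep (fun a => w a * (ln (w a / q1 a) - D1))
                  (fun b => w' b * (ln (w' b / q2 b) - D2))).
by rewrite centred hw.2 hw'.2; ring.
Qed.

End ProductLvar.
End Marginals.

Section ProductChannel.
Variables (X Y X' Y' : finType) (x0 : X) (x0' : X').
Variables (W : X -> Y -> R) (W' : X' -> Y' -> R).
Hypotheses (hW : is_channel W) (hW' : is_channel W').
Local Notation Wp := (prod_channel W W').

Lemma prod_channel_ok : is_channel Wp.
Proof.
move=> [x x']; split => [[y y']|]; first by apply: Rmult_le_pos; [apply: W_ge0 | apply: W_ge0].
by rewrite /prod_channel rsum_sep !W_sum // Rmult_1_r.
Qed.

Lemma outd_marg1 P : outd (marg1 P) W = marg1 (outd P Wp).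
Proof.
apply: functional_extensionality => y.
rewrite /marg1 /outd rsum_exchange rsum_pair; apply: rsum_ext => x.
rewrite -rsum_scal_r; apply: rsum_ext => x' /=; rewrite /prod_channel /=.
under rsum_ext => y' do rewrite -Rmult_assoc.
by rewrite rsum_scal W_sum // Rmult_1_r.
Qed.

Lemma outd_marg2 P : outd (marg2 P) W' = marg2 (outd P Wp).
Proof.
apply: functional_extensionality => y'.
rewrite /marg2 /outd rsum_exchange rsum_pair rsum_exchange; apply: rsum_ext => x'.
rewrite -rsum_scal_r; apply: rsum_ext => x /=; rewrite /prod_channel /=.
under rsum_ext => y do rewrite (Rmult_comm (W x y)) -Rmult_assoc.
by rewrite rsum_scal W_sum // Rmult_1_r.
Qed.

Lemma outd_prodd P1 P2 : outd (prodd P1 P2) Wp = prodd (outd P1 W) (outd P2 W').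
Proof.
apply: functional_extensionality => -[y y'].
rewrite /outd /prodd /prod_channel /= -rsum_sep; apply: rsum_ext => p; ring.
Qed.

Lemma negentropy_prod p : negentropy Wp p = negentropy W p.1 + negentropy W' p.2.
Proof.
case: p => x x'; rewrite /negentropy /prod_channel rsum_pair /=.
have inner y : rsum (fun y' => ent (W x y * W' x' y')) =
    W x y * rsum (fun y' => ent (W' x' y')) + ent (W x y).
  rewrite (rsum_ext (g := fun y' => W x y * ent (W' x' y') + W' x' y' * ent (W x y))).
    by rewrite rsum_add rsum_scal rsum_scal_r W_sum // Rmult_1_l.
  move=> y'; apply: ent_mul; [exact: (W_ge0 hW) | exact: (W_ge0 hW')].
by rewrite (rsum_ext inner) rsum_add rsum_scal_r W_sum // Rmult_1_l Rplus_comm.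
Qed.

(* I(P, W x W') <= I(P1, W) + I(P2, W'), by subadditivity of output entropy. *)
Lemma mutinf_prod_le P : is_dist P ->
  mutinf P Wp <= mutinf (marg1 P) W + mutinf (marg2 P) W'.
Proof.
move=> hP; rewrite (mutinf_ent prod_channel_ok hP.1).
rewrite (mutinf_ent hW (marg1_dist hP).1) (mutinf_ent hW' (marg2_dist hP).1).
under rsum_ext => p do rewrite negentropy_prod.
rewrite (rsum_marg P (negentropy W) (negentropy W')) outd_marg1 outd_marg2.
by have := ent_subadditive (outd_dist prod_channel_ok hP); lra.
Qed.

Lemma mutinf_prodd P1 P2 : is_dist P1 -> is_dist P2 ->
  mutinf (prodd P1 P2) Wp = mutinf P1 W + mutinf P2 W'.
Proof.
move=> h1 h2; have hP := prodd_dist h1 h2.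
rewrite (mutinf_ent prod_channel_ok hP.1) (mutinf_ent hW h1.1) (mutinf_ent hW' h2.1).
under rsum_ext => p do rewrite negentropy_prod.
rewrite (rsum_marg _ (negentropy W) (negentropy W')) marg1_prodd // marg2_prodd //.
rewrite outd_prodd (rsum_ext (g := fun p => outd P1 W p.1 * ent (outd P2 W' p.2) +
                                          outd P2 W' p.2 * ent (outd P1 W p.1))); last first.
  by move=> p; apply: ent_mul; [exact: (outd_dist hW h1).1 | exact: (outd_dist hW' h2).1].
rewrite rsum_add (rsum_sep (outd P1 W) (fun y' => ent (outd P2 W' y'))).
rewrite (rsum_ext (f := fun p => outd P2 W' p.2 * ent (outd P1 W p.1))
                  (g := fun p => ent (outd P1 W p.1) * outd P2 W' p.2)) => [|p]; last by ring.
rewrite (rsum_sep (fun y => ent (outd P1 W y)) (outd P2 W')).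
by rewrite (outd_dist hW h1).2 (outd_dist hW' h2).2; ring.
Qed.

Lemma capacity_prod : capacity Wp = capacity W + capacity W'.
Proof.
apply: eps_max; split.
  have [P1 [h1 I1]] := cap_achieving_exists x0 hW.
  have [P2 [h2 I2]] := cap_achieving_exists x0' hW'.
  by exists (prodd P1 P2); split; [exact: prodd_dist | rewrite mutinf_prodd // I1 I2].
move=> c [P [hP ->]]; have := mutinf_prod_le hP.
have := mutinf_le_capacity x0 hW (marg1_dist hP).
have := mutinf_le_capacity x0' hW' (marg2_dist hP); lra.
Qed.

Lemma cap_achieving_marg P : cap_achieving Wp P ->
  cap_achieving W (marg1 P) /\ cap_achieving W' (marg2 P).
Proof.
move=> [hP IP]; have := mutinf_prod_le hP; rewrite IP capacity_prod.
have := mutinf_le_capacity x0 hW (marg1_dist hP).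
have := mutinf_le_capacity x0' hW' (marg2_dist hP).
by move=> le1 le2 le12; split; (split; [exact: marg1_dist || exact: marg2_dist | lra]).
Qed.

Lemma cap_achieving_prodd P1 P2 : cap_achieving W P1 -> cap_achieving W' P2 ->
  cap_achieving Wp (prodd P1 P2).
Proof.
move=> [h1 I1] [h2 I2]; split; first exact: prodd_dist.
by rewrite mutinf_prodd // I1 I2 capacity_prod.
Qed.

(* For a capacity-achieving P, the output of P is the product of the outputs
   of its marginals, so the dispersion splits as the sum of the marginal
   dispersions. *)
Lemma dispersion_prod P : cap_achieving Wp P ->
  dispersion P Wp = dispersion (marg1 P) W + dispersion (marg2 P) W'.
Proof.
move=> hPa; have [hP _] := hPa; have [[h1 _] [h2 _]] := cap_achieving_marg hPa.
have outd_split : outd P Wp = prodd (outd (marg1 P) W) (outd (marg2 P) W').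
  rewrite -outd_prodd; apply: (cap_achieving_outd (x0, x0') prod_channel_ok hPa).
  exact: cap_achieving_prodd (cap_achieving_marg hPa).1 (cap_achieving_marg hPa).2.
rewrite /dispersion -/(lvar _ _) outd_split -rsum_marg; apply: rsum_ext => -[x x'] /=.
case: (hP.1 (x, x')) => [Px_gt0|<-]; last by rewrite !Rmult_0_l.
congr (_ * _); apply: lvar_prodd (hW x) (hW' x') _ _ => [y|y'].
  exact: (outd_pos hW (proj1 h1) (marg1_pos (proj1 hP) Px_gt0)).
exact: (outd_pos hW' (proj1 h2) (marg2_pos (proj1 hP) Px_gt0)).
Qed.

Lemma disp_values_prod v : disp_values Wp v <->
  exists v1 v2, disp_values W v1 /\ disp_values W' v2 /\ v = v1 + v2.
Proof.
split => [[P [hPa ->]]|[v1 [v2 [[P1 [h1 ->]] [[P2 [h2 ->]] ->]]]]].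
  have [h1 h2] := cap_achieving_marg hPa.
  by exists (dispersion (marg1 P) W), (dispersion (marg2 P) W'); rewrite dispersion_prod //;
    split; [exists (marg1 P) | split; [exists (marg2 P)|]].
exists (prodd P1 P2); have hPa := cap_achieving_prodd h1 h2; split => //.
by rewrite dispersion_prod // marg1_prodd ?marg2_prodd //; [exact: h1.1 | exact: h2.1].
Qed.

End ProductChannel.

Section SumSet.
Variables (S S1 S2 : R -> Prop).
Hypothesis S_sum : forall v, S v <-> exists v1 v2, S1 v1 /\ S2 v2 /\ v = v1 + v2.

Lemma is_max_sum m1 m2 : is_max S1 m1 -> is_max S2 m2 -> is_max S (m1 + m2).
Proof.
move=> [S1m1 max1] [S2m2 max2]; split; first by apply/S_sum; exists m1, m2.
by move=> v /S_sum [v1 [v2 [S1v1 [S2v2 ->]]]]; have := max1 _ S1v1; have := max2 _ S2v2; lra.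
Qed.

Lemma is_min_sum m1 m2 : is_min S1 m1 -> is_min S2 m2 -> is_min S (m1 + m2).
Proof.
move=> [S1m1 min1] [S2m2 min2]; split; first by apply/S_sum; exists m1, m2.
by move=> v /S_sum [v1 [v2 [S1v1 [S2v2 ->]]]]; have := min1 _ S1v1; have := min2 _ S2v2; lra.
Qed.

End SumSet.

Unset Implicit Arguments.

Theorem lemma3 (X Y X' Y' : finType) (x0 : X) (x0' : X')
  (W : X -> Y -> R) (W' : X' -> Y' -> R) :
  is_channel W -> is_channel W' ->
  Vplus (prod_channel W W') = Vplus W + Vplus W' /\
  Vminus (prod_channel W W') = Vminus W + Vminus W'.
Proof.
move=> hW hW'; have disp_sum := disp_values_prod x0 x0' hW hW'.
split.
  apply: (eps_max (S := disp_values (prod_channel W W'))).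
  exact (is_max_sum disp_sum (Vplus_is_max x0 hW) (Vplus_is_max x0' hW')).
apply: (eps_min (S := disp_values (prod_channel W W'))).
exact (is_min_sum disp_sum (Vminus_is_min x0 hW) (Vminus_is_min x0' hW')).
Qed.
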